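(* Let $(G,N,\theta)_{\mathcal H}$ and $(H,M,\varphi)_{\mathcal H}$ be $\mathcal H$-triples with $H\le G$ satisfying: (i) $G=NH$, $N\cap H=M$, $\mathbf C_G(N)\subseteq H$; and (ii) $(H\times\mathcal H)_\theta=(H\times\mathcal H)_\varphi$. Write $A=(H\times\mathcal H)_\theta$. Let $\mathcal P$ and $\mathcal P'$ be projective representations of $G_\theta$ and $H_\varphi$ associated with $\theta$ and $\varphi$ respectively, with entries in $\mathbb Q^{\mathrm{ab}}$, whose factor sets $\alpha,\alpha'$ take root-of-unity values, with $\alpha$ and $\alpha'$ equal on $H_\theta\times H_\theta$, and such that for each $c\in\mathbf C_G(N)$ the scalar matrices $\mathcal P(c)$ and $\mathcal P'(c)$ correspond to the same scalar. Then the condition ''$\mu_a$ and $\mu'_a$ agree on $H_\theta$'' holds for every $a\in A$ if and only if it holds for every $a$ in some complete set of representatives of the cosets of $H_\theta$ (identified with $H_\theta\times\{1\}$) in $A$.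
   Context: All groups are finite; $p$ is a fixed prime. $\mathbb Q^{\mathrm{ab}}\subseteq\mathbb C$ is generated by all roots of unity, $\mathcal G=\mathrm{Gal}(\mathbb Q^{\mathrm{ab}}/\mathbb Q)$, $\mathcal H\le\mathcal G$ consists of those $\sigma$ for which there is an integer $f$ with $\sigma(\xi)=\xi^{p^f}$ for all roots of unity $\xi$ of order prime to $p$. For $N\trianglelefteq G$, $\theta\in\mathrm{Irr}(N)$, $g\in G$, $\sigma\in\mathcal G$: $\theta^{g\sigma}(n)=\sigma(\theta(gng^{-1}))$; $(H\times\mathcal H)_\theta$ is the stabilizer; $\theta^{\mathcal H}$ the $\mathcal H$-orbit; $G_{\theta^{\mathcal H}}=\{g:\theta^g\in\theta^{\mathcal H}\}$. $(G,N,\theta)_{\mathcal H}$ is an $\mathcal H$-triple if $N\trianglelefteq G$, $\theta\in\mathrm{Irr}(N)$, $G_{\theta^{\mathcal H}}=G$. Projective representation $\mathcal P$ with factor set $\alpha$: $\mathcal P(x)\mathcal P(y)=\alpha(x,y)\mathcal P(xy)$. For $G$-invariant $\theta$, $\mathcal P$ is associated with $\theta$ if $\mathcal P_N$ affords $\theta$ and $\mathcal P(ng)=\mathcal P(n)\mathcal P(g)$, $\mathcal P(gn)=\mathcal P(g)\mathcal P(n)$. For $a=(x,\sigma)$ with $\theta^{x\sigma}=\theta$, $\mathcal P^{a}(y)=\sigma(\mathcal P(xyx^{-1}))$ (entrywise), and $\mu_a:G_\theta\to\mathbb C^\times$ is the unique function, constant on $N$-cosets, $\mu_a(1)=1$,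 such that $\mathcal P^a(y)=\mu_a(y)L^{-1}\mathcal P(y)L$ for all $y$ and some invertible $L$; $\mu'_a:H_\varphi\to\mathbb C^\times$ is defined in the same way from $\mathcal P'$ and $\varphi$. *)

From mathcomp Require Import all_boot all_order all_algebra all_fingroup all_solvable all_field all_character.
Set Implicit Arguments. Unset Strict Implicit. Unset Printing Implicit Defensive.
Import GroupScope GRing.Theory Num.Theory.
Local Open Scope ring_scope.

(* Galois automorphisms are modelled as ring endomorphisms (= automorphisms)
   of algC; only their restriction to Q^ab (generated by roots of unity) matters. *)
Notation galT := {rmorphism algC -> algC}.

(* sigma lies in (the preimage of) the group \mathcal H attached to the prime p *)
Definition inHgal (p : nat) (s : galT) : Prop :=
  exists f : nat, forall (z : algC) (m : nat),
    (0 < m)%N -> coprime m p -> z ^+ m = 1 -> s z = z ^+ (p ^ f).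

(* equality of the restrictions to Q^ab (i.e. equality in Gal(Q^ab/Q)) *)
Definition galEq (s t : galT) : Prop :=
  forall (z : algC) (m : nat), (0 < m)%N -> z ^+ m = 1 -> s z = t z.

Definition in_Qab (z : algC) : Prop :=
  exists (m : nat) (zeta : algC) (q : {poly rat}),
    [/\ (0 < m)%N, zeta ^+ m = 1 & z = (map_poly ratr q).[zeta]].

Definition rootof1 (z : algC) : Prop := exists2 m : nat, (0 < m)%N & z ^+ m = 1.

Section Defs.
Variable gT : finGroupType.

Definition stab (K : {set gT}) (B : {set gT}) (theta : 'CF(B)) : {set gT} :=
  [set x in K | (theta ^ x)%CF == theta].

(* (G, N, theta)_H is an H-triple; theta^{g sigma}(n) = sigma(theta(g n g^-1))
   is cfAut sigma (theta ^ g)%CF. *)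
Definition Htriple (p : nat) (G N : {group gT}) (theta : 'CF(N)) : Prop :=
  [/\ N <| G, theta \in irr N &
      forall g, g \in G -> exists2 s : galT, inHgal p s & (theta ^ g)%CF = cfAut s theta].

Definition proj_rep (K : {set gT}) (n : nat) (P : gT -> 'M[algC]_n)
    (alpha : gT -> gT -> algC) : Prop :=
  (forall x, x \in K -> P x \in unitmx) /\
  (forall x y, x \in K -> y \in K -> P x *m P y = alpha x y *: P (x * y)%g).

Definition assoc_with (N : {group gT}) (theta : 'CF(N)) (K : {set gT}) (n : nat)
    (P : gT -> 'M[algC]_n) : Prop :=
  [/\ P 1%g = 1%:M,
      forall x y, x \in N -> y \in N -> P (x * y)%g = P x *m P y,
      forall x, x \in N -> \tr (P x) = theta x &
      forall m g, m \in N -> g \in K ->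
        P (m * g)%g = P m *m P g /\ P (g * m)%g = P g *m P m].

Definition entries_in_Qab (K : {set gT}) (n : nat) (P : gT -> 'M[algC]_n) : Prop :=
  forall x i j, x \in K -> in_Qab (P x i j).

(* mu is (a candidate for) mu_a, a = (x, s), built from P on K, constant on N-cosets:
   P^a(y) = s(P(x y x^-1)) = mu(y) L^-1 P(y) L. *)
Definition is_mu (K N : {set gT}) (n : nat) (P : gT -> 'M[algC]_n)
    (x : gT) (s : galT) (mu : gT -> algC) : Prop :=
  [/\ mu 1%g = 1,
      forall y, y \in K -> mu y != 0,
      forall y m, y \in K -> m \in N -> mu (m * y)%g = mu y &
      exists2 L : 'M[algC]_n, L \in unitmx &
        forall y, y \in K ->
          map_mx s (P (x * y * x^-1)%g) = mu y *: (invmx L *m P y *m L)].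

End Defs.

From mathcomp Require Import all_boot all_order all_algebra all_fingroup all_solvable all_field all_character.
From mathcomp Require Import ring.
Import GroupScope GRing.Theory Num.Theory.
Local Open Scope ring_scope.
Set Implicit Arguments. Unset Strict Implicit. Unset Printing Implicit Defensive.

(* For h in H_theta and a = (x, s) in A, the representation P^((h,1)a) differs from
   P^a conjugated by s(P(h)) only by the scalar function y |-> s(c_h(x y x^-1)), where
   c_h is computed from the factor set alpha (conj_factor); hence
   mu_((h,1)a) = s(c_h(x _ x^-1)) mu_a, and likewise for mu' with alpha'.  Since alpha
   and alpha' agree on H_theta, the two correction factors coincide, so whether mu_a
   and mu'_a agree on H_theta only depends on the coset of a.  Finally mu_a depends on
   s only through its restriction to Q^ab, which contains the entries of P and P'. *)

Lemma unitmx_neq0 (R : comUnitRingType) n (A : 'M[R]_n) :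
  (0 < n)%N -> A \in unitmx -> A != 0.
Proof. by case: n A => // n A _; apply: contraTneq => ->; rewrite unitmxE det0 unitr0. Qed.

Lemma scalemx_injl (R : idomainType) n (A : 'M[R]_n) (a b : R) :
  (0 < n)%N -> A \in unitmx -> a *: A = b *: A -> a = b.
Proof.
move=> n_gt0 uA /eqP; rewrite -subr_eq0 -scalerBl scalemx_eq0.
by rewrite (negPf (unitmx_neq0 n_gt0 uA)) orbF subr_eq0 => /eqP.
Qed.

Lemma invmxM (R : comUnitRingType) n (A B : 'M[R]_n) :
  A \in unitmx -> B \in unitmx -> invmx (A *m B) = invmx B *m invmx A.
Proof.
move=> uA uB; have uAB : A *m B \in unitmx by rewrite unitmx_mul uA.
by rewrite -[RHS]mul1mx -(mulVmx uAB) -!mulmxA mulKVmx // mulmxV // mulmx1.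
Qed.

Lemma mem_conjgV_norm (gT : finGroupType) (A : {set gT}) x z :
  x \in 'N(A) -> z \in A -> (x * z * x^-1)%g \in A.
Proof.
move=> nAx Az; have -> : (x * z * x^-1 = z ^ x^-1)%g by rewrite conjgE invgK mulgA.
by rewrite memJ_norm ?groupV.
Qed.

(* Expanding P(g) P(w) P(g^-1) with the factor set and using
   P(g^-1) = alpha(g, g^-1) P(g)^-1 gives P(g w g^-1) = conj_factor alpha g w * P(g) P(w) P(g)^-1. *)
Definition conj_factor (gT : finGroupType) (alpha : gT -> gT -> algC) (g w : gT) : algC :=
  alpha g g^-1%g / (alpha g w * alpha (g * w)%g g^-1%g).

Lemma eq_conj_factor (gT : finGroupType) (A : {group gT}) (alpha alpha' : gT -> gT -> algC) :
  {in A &, alpha =2 alpha'} -> {in A &, conj_factor alpha =2 conj_factor alpha'}.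
Proof. by move=> eqA g w Ag Aw; rewrite /conj_factor !eqA ?groupV ?groupM. Qed.

Section ProjRepConj.

Variables (gT : finGroupType) (K N : {group gT}) (theta : 'CF(N)) (n : nat).
Variables (P : gT -> 'M[algC]_n) (alpha : gT -> gT -> algC).
Hypotheses (n_gt0 : (0 < n)%N) (nsNK : N <| K).
Hypotheses (PR : proj_rep K P alpha) (AS : assoc_with theta K P).

Let PU x : x \in K -> P x \in unitmx. Proof. by case: PR => PU _; apply: PU. Qed.
Let PM x y : x \in K -> y \in K -> P x *m P y = alpha x y *: P (x * y)%g.
Proof. by case: PR => _; apply. Qed.
Let PmulN m g : m \in N -> g \in K -> P (m * g)%g = P m *m P g /\ P (g * m)%g = P g *m P m.
Proof. by case: AS => _ _ _; apply. Qed.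
Let sNK : N \subset K := normal_sub nsNK.
Let nNK : K \subset 'N(N) := normal_norm nsNK.

Lemma factor_set_neq0 x y : x \in K -> y \in K -> alpha x y != 0.
Proof.
move=> Kx Ky; apply/eqP=> a0.
have /(unitmx_neq0 n_gt0) : P x *m P y \in unitmx by rewrite unitmx_mul !PU.
by rewrite PM // a0 scale0r eqxx.
Qed.

Lemma proj_rep_inv g : g \in K -> P g^-1%g = alpha g g^-1%g *: invmx (P g).
Proof.
move=> Kg; have P1 : P 1%g = 1%:M by case: AS.
have := congr1 (mulmx (invmx (P g))) (PM Kg (groupVr Kg)).
by rewrite mulgV P1 -scalemxAr mulmx1 mulKmx ?PU.
Qed.

Lemma conj_factor_neq0 g w : g \in K -> w \in K -> conj_factor alpha g w != 0.
Proof. by move=> Kg Kw; rewrite mulf_neq0 ?invr_eq0 ?mulf_neq0 ?factor_set_neq0 ?groupV ?groupM. Qed.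

Lemma proj_rep_conj g w : g \in K -> w \in K ->
  P (g * w * g^-1)%g = conj_factor alpha g w *: (P g *m P w *m invmx (P g)).
Proof.
move=> Kg Kw; have Kg' := groupVr Kg.
have a1 := factor_set_neq0 Kg Kw; have a2 := factor_set_neq0 (groupM Kg Kw) Kg'.
have a3 := factor_set_neq0 Kg Kg'.
have -> : invmx (P g) = (alpha g g^-1%g)^-1 *: P g^-1%g.
  by rewrite proj_rep_inv // scalerA mulVf // scale1r.
rewrite -scalemxAr PM // -scalemxAl PM ?groupM // !scalerA.
by rewrite -[LHS]scale1r; congr (_ *: _); rewrite /conj_factor; field; rewrite a1 a2 a3.
Qed.

Lemma proj_rep_conj_normal g m : g \in K -> m \in N ->
  P (g * m * g^-1)%g = P g *m P m *m invmx (P g).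
Proof.
move=> Kg Nm; have Nm' : (g * m * g^-1)%g \in N by rewrite mem_conjgV_norm ?(subsetP nNK).
have [PJg _] := PmulN Nm' Kg; have [_ Pgm] := PmulN Nm Kg.
by rewrite -(mulmxK (PU Kg) (P _)) -PJg mulgKV Pgm.
Qed.

Lemma conj_factor_normal g m : g \in K -> m \in N -> conj_factor alpha g m = 1.
Proof.
move=> Kg Nm; have Km := subsetP sNK m Nm.
apply: (scalemx_injl n_gt0 (_ : P g *m P m *m invmx (P g) \in unitmx)).
  by rewrite !unitmx_mul unitmx_inv !PU.
by rewrite -proj_rep_conj // scale1r proj_rep_conj_normal.
Qed.

Lemma conj_factor_mulN g m w : g \in K -> m \in N -> w \in K ->
  conj_factor alpha g (m * w) = conj_factor alpha g w.
Proof.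
move=> Kg Nm Kw; have Km := subsetP sNK m Nm.
have Nm' : (g * m * g^-1)%g \in N by rewrite mem_conjgV_norm ?(subsetP nNK).
have splitJ : (g * (m * w) * g^-1 = (g * m * g^-1) * (g * w * g^-1))%g.
  by rewrite !mulgA mulgKV.
have [Pmw _] := PmulN Nm Kw.
apply: (scalemx_injl n_gt0 (_ : P g *m P (m * w)%g *m invmx (P g) \in unitmx)).
  by rewrite !unitmx_mul unitmx_inv !PU ?groupM.
rewrite -proj_rep_conj ?groupM // splitJ.
have [-> _] := PmulN Nm' (groupM (groupM Kg Kw) (groupVr Kg)).
rewrite proj_rep_conj_normal // proj_rep_conj //.
by rewrite -!scalemxAr Pmw !mulmxA mulmxKV ?PU.
Qed.

Lemma is_mu_mull x g (s : galT) mu : x \in 'N(K) -> x \in 'N(N) -> g \in K ->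
  is_mu K N P x s mu ->
  is_mu K N P (g * x) s (fun y => s (conj_factor alpha g (x * y * x^-1)) * mu y).
Proof.
move=> nKx nNx Kg [mu1 mu_neq0 muN [L uL PsE]].
have KJ y : y \in K -> (x * y * x^-1)%g \in K by apply: mem_conjgV_norm.
split.
- by rewrite mulg1 mulgV conj_factor_normal // rmorph1 mu1 mulr1.
- by move=> y Ky; rewrite mulf_neq0 ?mu_neq0 // fmorph_eq0 conj_factor_neq0 ?KJ.
- move=> y m Ky Nm.
  have -> : (x * (m * y) * x^-1 = (x * m * x^-1) * (x * y * x^-1))%g by rewrite !mulgA mulgKV.
  by rewrite conj_factor_mulN ?KJ ?mem_conjgV_norm // muN.
set S := map_mx s (P g); have uS : S \in unitmx by rewrite map_unitmx PU.
exists (L *m invmx S) => [|y Ky]; first by rewrite unitmx_mul uL unitmx_inv.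
have -> : (g * x * y * (g * x)^-1 = g * (x * y * x^-1) * g^-1)%g by rewrite invMg !mulgA.
rewrite proj_rep_conj ?KJ // map_mxZ !map_mxM map_invmx PsE // -/S invmxM ?unitmx_inv // invmxK.
by rewrite -scalemxAr -scalemxAl scalerA !mulmxA.
Qed.

End ProjRepConj.

Lemma galEq_Qab (s t : galT) z : galEq s t -> in_Qab z -> s z = t z.
Proof.
move=> st [m [zeta [q [m_gt0 zeta_m ->]]]].
have map_ratr (u : galT) : map_poly u (map_poly ratr q) = map_poly ratr q.
  by rewrite -map_poly_comp; apply: eq_map_poly => a /=; rewrite fmorph_rat.
by rewrite -!horner_map !map_ratr (st zeta m).
Qed.

Lemma is_mu_galEq (gT : finGroupType) (K N : {set gT}) n (P : gT -> 'M[algC]_n) x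
    (s t : galT) mu :
  galEq s t -> entries_in_Qab K P -> x \in 'N(K) ->
  is_mu K N P x s mu -> is_mu K N P x t mu.
Proof.
move=> st QP nKx [mu1 mu_neq0 muN [L uL PsE]]; split=> //; exists L => // y Ky.
rewrite -PsE //; apply/matrixP=> i j; rewrite !mxE.
by rewrite (galEq_Qab st) //; apply: QP; rewrite mem_conjgV_norm.
Qed.

Section MuAgree.

Variables (gT : finGroupType) (K N K' M : {group gT}) (theta : 'CF(N)) (phi : 'CF(M)).
Variables (n n' : nat) (P : gT -> 'M[algC]_n) (P' : gT -> 'M[algC]_n').
Variables (alpha alpha' : gT -> gT -> algC).
Hypotheses (nsNK : N <| K) (nsMK' : M <| K') (sK'K : K' \subset K).
Hypotheses (n_gt0 : (0 < n)%N) (n'_gt0 : (0 < n')%N).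
Hypotheses (PR : proj_rep K P alpha) (AS : assoc_with theta K P) (QP : entries_in_Qab K P).
Hypotheses (PR' : proj_rep K' P' alpha') (AS' : assoc_with phi K' P').
Hypothesis (QP' : entries_in_Qab K' P').
Hypothesis alphaE : {in K' &, alpha =2 alpha'}.

Definition mu_agree x (s : galT) :=
  forall mu mu', is_mu K N P x s mu -> is_mu K' M P' x s mu' -> {in K', mu =1 mu'}.

Lemma mu_agree_coset x s y t :
  x \in 'N(K) -> x \in 'N(K') -> x \in 'N(N) -> x \in 'N(M) ->
  (x * y^-1)%g \in K' -> galEq s t -> mu_agree y t -> mu_agree x s.
Proof.
set g := (y * x^-1)%g => nKx nK'x nNx nMx K'xy st agree_y mu mu' mu_x mu'_x z K'z.
have K'g : g \in K' by rewrite -[g]invgK invMg invgK groupV.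
have Kg := subsetP sK'K g K'g.
have gxE : (g * x)%g = y by rewrite mulgKV.
have nKy : y \in 'N(K) by rewrite -gxE groupM // (subsetP (normG K)).
have nK'y : y \in 'N(K') by rewrite -gxE groupM // (subsetP (normG K')).
have := is_mu_mull n_gt0 nsNK PR AS nKx nNx Kg mu_x.
have := is_mu_mull n'_gt0 nsMK' PR' AS' nK'x nMx K'g mu'_x.
rewrite gxE => /(is_mu_galEq st QP' nK'y) mu'_y /(is_mu_galEq st QP nKy) mu_y.
have K'xz : (x * z * x^-1)%g \in K' by rewrite mem_conjgV_norm.
move: (agree_y _ _ mu_y mu'_y z K'z) => /=; rewrite (eq_conj_factor alphaE) //.
by apply: mulfI; rewrite fmorph_eq0 (conj_factor_neq0 n'_gt0 PR').
Qed.

End MuAgree.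

Lemma inHgal_id p : inHgal p (idfun : galT).
Proof. by exists 0%N => z m _ _ _; rewrite expn0 expr1. Qed.

Lemma cfAut_idfun (gT : finGroupType) (B : {set gT}) (phi : 'CF(B)) :
  cfAut (idfun : galT) phi = phi.
Proof. by apply/cfunP=> z; rewrite cfunE. Qed.

Lemma stab_Inertia (gT : finGroupType) (L B : {group gT}) (phi : 'CF(B)) :
  L \subset 'N(B) -> stab L phi = 'I_L[phi].
Proof.
move=> nBL; apply/setP=> z; rewrite !inE.
case Lz: (z \in L) => //=.
by have := subsetP nBL z Lz; rewrite inE => ->.
Qed.

Lemma eq_Inertia (gT : finGroupType) (L B C : {group gT}) (theta : 'CF(B)) (phi : 'CF(C)) :
  L \subset 'N(B) -> L \subset 'N(C) ->
  {in L, forall x, (theta ^ x)%CF = theta <-> (phi ^ x)%CF = phi} -> 'I_L[theta] = 'I_L[phi].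
Proof.
move=> nBL nCL eqI; apply/setP=> x; rewrite !in_setI; case Lx: (x \in L) => //=.
have [theta_phi phi_theta] := eqI x Lx.
apply/setIdP/setIdP=> -[_ /eqP fix_x].
  by split; [rewrite (subsetP nCL) | apply/eqP; apply: theta_phi].
by split; [rewrite (subsetP nBL) | apply/eqP; apply: phi_theta].
Qed.

Lemma norm_Inertia_cfAut_conjg (gT : finGroupType) (L B : {group gT}) (phi : 'CF(B))
    x (s : galT) :
  x \in L -> x \in 'N(B) -> cfAut s (phi ^ x)%CF = phi -> x \in 'N('I_L[phi]).
Proof.
move=> Lx nBx phi_xs.
have sub_IJ : 'I_L[phi] \subset 'I_L[phi] :^ x.
  apply/subsetP=> z /setIP[Lz /setIdP[nBz /eqP phi_z]].
  have nBzx : (z ^ x^-1)%g \in 'N(B) by rewrite groupJ ?groupV.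
  rewrite mem_conjg in_setI groupJ ?groupV //=; apply/setIdP; split=> //; apply/eqP.
  have phix_z : ((phi ^ x) ^ z)%CF = (phi ^ x)%CF.
    by apply: (cfAut_inj s); rewrite cfAutConjg phi_xs.
  by rewrite conjgE invgK !cfConjgMnorm ?groupM ?groupV // phix_z cfConjgK.
by apply/normP/eqP; rewrite eq_sym eqEcard sub_IJ cardJg leqnn.
Qed.

Lemma assoc_with_dim_gt0 (gT : finGroupType) (N : {group gT}) (theta : 'CF(N))
    (K : {set gT}) n (P : gT -> 'M[algC]_n) :
  theta \in irr N -> assoc_with theta K P -> (0 < n)%N.
Proof.
move=> /irrP[i ->] [P1 _ trP _]; rewrite lt0n; apply/eqP=> n0.
by have := irr1_neq0 i; rewrite -trP // P1 mxtrace1 n0 eqxx.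
Qed.

Lemma rcoset_transversal (gT : finGroupType) (S : Type) (e : S -> S -> Prop)
    (K : {group gT}) (A : gT -> S -> Prop) :
  (forall s, e s s) -> (forall g x s, g \in K -> A x s -> A (g * x)%g s) ->
  exists T : gT -> S -> Prop,
    [/\ forall x s, T x s -> A x s,
        forall x s, A x s -> exists y t, T y t /\ (e s t /\ (x * y^-1)%g \in K) &
        forall x s y t, T x s -> T y t -> e s t /\ (x * y^-1)%g \in K -> x = y /\ e s t].
Proof.
move=> e_refl A_mull; exists (fun x s => A x s /\ x = repr (K :* x)); split.
- by move=> x s [].
- move=> x s Axs; set y := repr (K :* x).
  have Kyx : (y * x^-1)%g \in K by rewrite -mem_rcoset mem_repr_rcoset.
  exists y, s; split; last by split; rewrite // -[(x * _)%g]invgK invMg invgK groupV.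
  by rewrite rcoset_repr -(mulgKV x y); split; [apply: A_mull | rewrite mulgKV].
- move=> x s y t [_ xE] [_ yE] [est Kxy]; split=> //.
  by rewrite xE yE; congr repr; apply/rcoset_eqP; rewrite mem_rcoset.
Qed.

Theorem lemma1p8 (p : nat) (gT : finGroupType) (G N H M : {group gT})
    (theta : 'CF(N)) (phi : 'CF(M)) (n n' : nat)
    (P : gT -> 'M[algC]_n) (P' : gT -> 'M[algC]_n')
    (alpha alpha' : gT -> gT -> algC) :
  prime p ->
  Htriple p G theta -> Htriple p H phi -> H \subset G ->
  (* (i) *)
  (N * H)%g = G -> N :&: H = M -> 'C_G(N) \subset H ->
  (* (ii) (H x \mathcal H)_theta = (H x \mathcal H)_phi *)
  (forall x (s : galT), x \in H -> inHgal p s ->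
     cfAut s (theta ^ x)%CF = theta <-> cfAut s (phi ^ x)%CF = phi) ->
  proj_rep (stab G theta) P alpha -> assoc_with theta (stab G theta) P ->
  entries_in_Qab (stab G theta) P ->
  proj_rep (stab H phi) P' alpha' -> assoc_with phi (stab H phi) P' ->
  entries_in_Qab (stab H phi) P' ->
  (forall x y, x \in stab G theta -> y \in stab G theta -> rootof1 (alpha x y)) ->
  (forall x y, x \in stab H phi -> y \in stab H phi -> rootof1 (alpha' x y)) ->
  (forall x y, x \in stab H theta -> y \in stab H theta -> alpha x y = alpha' x y) ->
  (forall c, c \in 'C_G(N) -> exists lam : algC, P c = lam%:M /\ P' c = lam%:M) ->
  let inA := fun x (s : galT) =>
    [/\ x \in H, inHgal p s & cfAut s (theta ^ x)%CF = theta] in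
  let cond := fun x (s : galT) =>
    forall mu mu' : gT -> algC,
      is_mu (stab G theta) N P x s mu -> is_mu (stab H phi) M P' x s mu' ->
      forall y, y \in stab H theta -> mu y = mu' y in
  (* (x,s) and (y,t) lie in the same coset (H_theta x 1)(y,t) *)
  let samecoset := fun x (s : galT) y (t : galT) =>
    galEq s t /\ (x * y^-1)%g \in stab H theta in
  (forall x s, inA x s -> cond x s) <->
  (exists T : gT -> galT -> Prop,
     [/\ forall x s, T x s -> inA x s,
         forall x s, inA x s -> exists y t, [/\ T y t & samecoset x s y t],
         forall x s y t, T x s -> T y t -> samecoset x s y t -> x = y /\ galEq s t &
         forall x s, T x s -> cond x s]).
Proof.
(* Condition (i), the root-of-unity values and the central scalars only serve the
   existence and uniqueness of mu_a, which cond does not require. *)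
move=> _ [nsNG irr_theta _] [nsMH irr_phi _] sHG _ _ _ galStabE PR AS QP PR' AS' QP' _ _ alphaE _.
have [nNG nMH] := (normal_norm nsNG, normal_norm nsMH).
have nNH : H \subset 'N(N) := subset_trans sHG nNG.
have IphiE : 'I_H[phi] = 'I_H[theta].
  apply: eq_Inertia nMH nNH _ => x Hx.
  by have := galStabE x idfun Hx (inHgal_id p); rewrite !cfAut_idfun; apply: iff_sym.
rewrite !stab_Inertia // IphiE in PR AS QP PR' AS' QP' alphaE *.
have nsNI : N <| 'I_G[theta] := normal_Inertia theta (normal_sub nsNG).
have nsMI : M <| 'I_H[theta] by rewrite -IphiE normal_Inertia ?normal_sub.
have sIHG : 'I_H[theta] \subset 'I_G[theta] := setSI _ sHG.
have n_gt0 := assoc_with_dim_gt0 irr_theta AS.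
have n'_gt0 := assoc_with_dim_gt0 irr_phi AS'.
move=> inA cond samecoset; split=> [condA | [T [TA Tcover _ condT]] x s [Hx Hs theta_xs]].
  have inA_mull g x s : g \in 'I_H[theta] -> inA x s -> inA (g * x)%g s.
    case/setIP=> Hg /inertiaJ theta_g [Hx Hs theta_xs]; split; rewrite ?groupM //.
    by rewrite cfConjgMnorm ?(subsetP nNH) // theta_g.
  have galEq_refl (s : galT) : galEq s s by [].
  have [T [TA Tcover Tuniq]] := rcoset_transversal galEq_refl inA_mull.
  by exists T; split=> // x s /TA /condA.
have [y [t [Tyt [st Kxy]]]] := Tcover x s (And3 Hx Hs theta_xs).
have [Gx nNx] := (subsetP sHG x Hx, subsetP nNH x Hx).
apply: (mu_agree_coset nsNI nsMI sIHG n_gt0 n'_gt0 PR AS QP PR' AS' QP' alphaE _ _ nNx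
          (subsetP nMH x Hx) Kxy st (condT y t Tyt)).
  exact: norm_Inertia_cfAut_conjg Gx nNx theta_xs.
exact: norm_Inertia_cfAut_conjg Hx nNx theta_xs.
Qed.
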